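(* Fix $\rho>0$ and $\nu\in(0,1)$. (I) For $\lambda_1\ge0$, $\lambda_3>0$ and $x\in[0,1]$ define $F_U(\lambda_1,\lambda_3;x):=1+\lambda_3\big(1-\exp\big(\tfrac{\lambda_1}{\lambda_3}(x-\nu)+\rho\big)\big)$. Fix $0<t_{\min}\le t_{\max}$ and suppose $t:=\lambda_1/\lambda_3\in[t_{\min},t_{\max}]$. If $0\le\lambda_3<\frac{1}{e^{\rho+t(1-\nu)}-1}$, then $F_U(\lambda_1,\lambda_3;x)>0$ for all $x\in[0,1]$. Moreover, for each fixed $x$, $(\lambda_1,\lambda_3)\mapsto F_U(\lambda_1,\lambda_3;x)$ is concave on $\{\lambda_3>0\}$; hence $g_U:=\log F_U$ is exp-concave on any compact subset of $\{\lambda_3>0\}$ on which $F_U>0$. (II) For $\beta>0$, $\gamma\ge0$, set $A(\beta,\nu):=e^{-\rho+\beta\nu}$ and $F_L(\gamma;\beta,\nu,x):=1+\gamma(e^{\beta x}-A(\beta,\nu))$, $x\in[0,1]$. Then $\gamma\mapsto F_L(\gamma;\beta,\nu,x)$ is affine, and $\min_{x\in[0,1]}F_L(\gamma;\beta,\nu,x)=1+\gamma(1-A(\beta,\nu))$. Consequently: if $A(\beta,\nu)\le1$ then $F_L(\gamma;\beta,\nu,x)\ge1$ for all $\gamma\ge0$, $x\in[0,1]$; if $A(\beta,\nu)>1$ then $F_L(\gamma;\beta,\nu,x)>0$ for all $x\in[0,1]$ whenever $0\le\gamma<\frac{1}{A(\beta,\nu)-1}$. On any compact interval of $\gamma$ on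 which $F_L>0$, $g_L:=\log F_L$ is exp-concave.
   Context: A function $g$ on a convex set is exp-concave if $e^{g}$ is concave there. *)

From mathcomp Require Import all_boot all_order all_algebra.
From mathcomp Require Import all_classical all_reals all_analysis.
Set Implicit Arguments. Unset Strict Implicit. Unset Printing Implicit Defensive.
Import Order.TTheory GRing.Theory Num.Theory.
Local Open Scope classical_set_scope.
Local Open Scope ring_scope.

Section defs.
Variable R : realType.

Definition convex_set1 (D : set R) : Prop :=
  forall x y t, D x -> D y -> 0 <= t <= 1 -> D (t * x + (1 - t) * y).

Definition convex_set2 (D : set (R * R)) : Prop :=
  forall p q t, D p -> D q -> 0 <= t <= 1 ->
    D (t * p.1 + (1 - t) * q.1, t * p.2 + (1 - t) * q.2).

Definition concave_on1 (D : set R) (f : R -> R) : Prop :=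
  forall x y t, D x -> D y -> 0 <= t <= 1 ->
    t * f x + (1 - t) * f y <= f (t * x + (1 - t) * y).

Definition concave_on2 (D : set (R * R)) (f : R * R -> R) : Prop :=
  forall p q t, D p -> D q -> 0 <= t <= 1 ->
    t * f p + (1 - t) * f q <=
      f (t * p.1 + (1 - t) * q.1, t * p.2 + (1 - t) * q.2).

Definition exp_concave_on1 (D : set R) (g : R -> R) : Prop :=
  convex_set1 D /\ concave_on1 D (fun x => expR (g x)).

Definition exp_concave_on2 (D : set (R * R)) (g : R * R -> R) : Prop :=
  convex_set2 D /\ concave_on2 D (fun p => expR (g p)).

Definition F_U (rho nu l1 l3 x : R) : R :=
  1 + l3 * (1 - expR (l1 / l3 * (x - nu) + rho)).

Definition A_L (rho beta nu : R) : R := expR (- rho + beta * nu).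

Definition F_L (rho gamma beta nu x : R) : R :=
  1 + gamma * (expR (beta * x) - A_L rho beta nu).

End defs.

(** The map (l1, l3) |-> l3 exp(l1 / l3 * c + rho) is the perspective of the
    convex function l1 |-> exp(l1 * c + rho), hence jointly convex on l3 > 0;
    so F_U, which is affine minus this perspective, is concave.  Concavity of F is exactly exp-concavity of ln F wherever F > 0.
    The positivity and minimum statements follow from the monotonicity of exp
    in x on [0, 1]. *)
From mathcomp Require Import all_boot all_order all_algebra.
From mathcomp Require Import all_classical all_reals all_analysis.
From mathcomp Require Import ring lra.
Set Implicit Arguments. Unset Strict Implicit. Unset Printing Implicit Defensive.
Import Order.TTheory GRing.Theory Num.Theory.
Local Open Scope classical_set_scope.
Local Open Scope ring_scope.

Lemma mulr_lt1_of_ltV (R : numFieldType) (c y : R) : 0 < c -> y < c^-1 -> y * c < 1.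
Proof. by move=> c_gt0; rewrite -ltr_pdivlMr // div1r. Qed.

Section ExpConcavity.
Variable R : realType.

Lemma concave_on2S (D D' : set (R * R)) (f : R * R -> R) :
  D' `<=` D -> concave_on2 D f -> concave_on2 D' f.
Proof. by move=> D'D fD p q t D'p D'q; apply: fD; apply: D'D. Qed.

Lemma exp_concave_on1_ln (D : set R) (f : R -> R) :
  convex_set1 D -> concave_on1 D f -> (forall x, D x -> 0 < f x) ->
  exp_concave_on1 D (fun x => ln (f x)).
Proof.
move=> cD fD f_gt0; split=> // x y t Dx Dy t01.
by rewrite !lnK ?posrE ?f_gt0 //; [exact: fD | exact: cD].
Qed.

Lemma exp_concave_on2_ln (D : set (R * R)) (f : R * R -> R) :
  convex_set2 D -> concave_on2 D f -> (forall p, D p -> 0 < f p) ->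
  exp_concave_on2 D (fun p => ln (f p)).
Proof.
move=> cD fD f_gt0; split=> // p q t Dp Dq t01.
by rewrite !lnK ?posrE ?f_gt0 //; [exact: fD | exact: cD].
Qed.

Lemma convex_set1_itv (a b : R) : convex_set1 [set g | a <= g <= b].
Proof.
move=> x y t /andP[ax xb] /andP[ay yb] /andP[t0 t1]; apply/andP; split; nra.
Qed.

Lemma concave_on1_affine (D : set R) (a b : R) :
  concave_on1 D (fun g => a + b * g).
Proof. by move=> x y t _ _ _; rewrite le_eqVlt; apply/orP; left; apply/eqP; ring. Qed.

End ExpConcavity.

Section Perspective.
Variable R : realType.

Lemma expR_tangent_le (m u : R) : expR m * (1 + (u - m)) <= expR u.
Proof.
have -> : expR u = expR m * expR (u - m) by rewrite -expRD; congr expR; ring.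
by rewrite ler_wpM2l ?expR_ge1Dx // ltW // expR_gt0.
Qed.

Lemma perspective_expR_convex (c rho a1 a3 b1 b3 t : R) :
  0 < a3 -> 0 < b3 -> 0 <= t <= 1 ->
  (t * a3 + (1 - t) * b3)
    * expR ((t * a1 + (1 - t) * b1) / (t * a3 + (1 - t) * b3) * c + rho)
  <= t * a3 * expR (a1 / a3 * c + rho) + (1 - t) * b3 * expR (b1 / b3 * c + rho).
Proof.
move=> a3_gt0 b3_gt0 /andP[t0 t1].
set s := t * a3 + (1 - t) * b3; have s_gt0 : 0 < s by rewrite /s; nra.
set m := _ + rho; set u := a1 / a3 * c + rho; set v := b1 / b3 * c + rho.
(* m is the (t a3 / s, (1 - t) b3 / s)-weighted mean of u and v, so the
   tangent lines of exp at m sum to exactly s * expR m. *)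
have mean_m : t * a3 * (u - m) + (1 - t) * b3 * (v - m) = 0.
  by rewrite /u /v /m /s; field; rewrite !gt_eqF.
have tu : t * a3 * (expR m * (1 + (u - m))) <= t * a3 * expR u.
  by rewrite ler_wpM2l ?expR_tangent_le //; nra.
have tv : (1 - t) * b3 * (expR m * (1 + (v - m))) <= (1 - t) * b3 * expR v.
  by rewrite ler_wpM2l ?expR_tangent_le //; nra.
have : t * a3 * (expR m * (1 + (u - m))) + (1 - t) * b3 * (expR m * (1 + (v - m)))
    = expR m * (s + (t * a3 * (u - m) + (1 - t) * b3 * (v - m))).
  by rewrite /s; ring.
rewrite mean_m addr0 => tangent_sum.
by rewrite [s * _]mulrC -tangent_sum; exact: lerD.
Qed.

End Perspective.

Section Bounds.
Variables (R : realType) (rho nu : R).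

Lemma F_U_concave (x : R) :
  concave_on2 [set p : R * R | 0 < p.2] (fun p => F_U rho nu p.1 p.2 x).
Proof.
move=> [a1 a3] [b1 b3] t /= a3_gt0 b3_gt0 t01.
have := @perspective_expR_convex R (x - nu) rho a1 a3 b1 b3 t a3_gt0 b3_gt0 t01.
rewrite /F_U /=; lra.
Qed.

Lemma F_U_gt0 (l1 l3 x : R) : 0 <= l1 / l3 -> 0 <= l3 -> x <= 1 ->
  l3 * (expR (rho + l1 / l3 * (1 - nu)) - 1) < 1 -> 0 < F_U rho nu l1 l3 x.
Proof.
move=> t_ge0 l3_ge0 x1 small_l3.
have : expR (l1 / l3 * (x - nu) + rho) <= expR (rho + l1 / l3 * (1 - nu)).
  rewrite ler_expR; have : l1 / l3 * (x - 1) <= 0 by rewrite mulr_ge0_le0 ?subr_le0.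
  lra.
rewrite /F_U; nra.
Qed.

Lemma F_L_affine (gamma beta x : R) :
  F_L rho gamma beta nu x = 1 + (expR (beta * x) - A_L rho beta nu) * gamma.
Proof. by rewrite /F_L mulrC. Qed.

Lemma F_L_ge_min (gamma beta x : R) : 0 <= gamma -> 0 <= beta -> 0 <= x ->
  1 + gamma * (1 - A_L rho beta nu) <= F_L rho gamma beta nu x.
Proof.
move=> gamma_ge0 beta_ge0 x_ge0.
have : 1 <= expR (beta * x) by rewrite -expR0 ler_expR mulr_ge0.
rewrite /F_L; nra.
Qed.

Lemma F_L_at0 (gamma beta : R) :
  F_L rho gamma beta nu 0 = 1 + gamma * (1 - A_L rho beta nu).
Proof. by rewrite /F_L mulr0 expR0. Qed.

End Bounds.

Theorem mainTheorem14 (R : realType) (rho nu : R) :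
  0 < rho -> 0 < nu < 1 ->
  (* (I) positivity *)
  (forall (tmin tmax l1 l3 : R),
     0 < tmin -> tmin <= tmax ->
     0 <= l1 -> 0 < l3 ->
     tmin <= l1 / l3 <= tmax ->
     0 <= l3 < (expR (rho + l1 / l3 * (1 - nu)) - 1)^-1 ->
     forall x : R, 0 <= x <= 1 -> 0 < F_U rho nu l1 l3 x) /\
  (* (I) concavity of (l1, l3) |-> F_U on {l3 > 0} *)
  (forall x : R, 0 <= x <= 1 ->
     concave_on2 [set p : R * R | 0 < p.2] (fun p => F_U rho nu p.1 p.2 x)) /\
  (* (I) exp-concavity of g_U = log F_U *)
  (forall x : R, 0 <= x <= 1 ->
     forall K : set (R * R),
       K `<=` [set p : R * R | 0 < p.2] -> compact (K : set (R^o * R^o)%type) -> convex_set2 K ->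
       (forall p, K p -> 0 < F_U rho nu p.1 p.2 x) ->
       exp_concave_on2 K (fun p => ln (F_U rho nu p.1 p.2 x))) /\
  (* (II) *)
  (forall beta : R, 0 < beta ->
     (* affine in gamma *)
     (forall x : R, 0 <= x <= 1 ->
        exists a b : R, forall gamma : R, F_L rho gamma beta nu x = a + b * gamma) /\
     (* minimum over x in [0,1] *)
     (forall gamma : R, 0 <= gamma ->
        (forall x : R, 0 <= x <= 1 ->
           1 + gamma * (1 - A_L rho beta nu) <= F_L rho gamma beta nu x) /\
        (exists2 x : R, 0 <= x <= 1 &
           F_L rho gamma beta nu x = 1 + gamma * (1 - A_L rho beta nu))) /\
     (A_L rho beta nu <= 1 ->
        forall gamma x : R, 0 <= gamma -> 0 <= x <= 1 ->
          1 <= F_L rho gamma beta nu x) /\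
     (1 < A_L rho beta nu ->
        forall gamma : R, 0 <= gamma < (A_L rho beta nu - 1)^-1 ->
          forall x : R, 0 <= x <= 1 -> 0 < F_L rho gamma beta nu x) /\
     (forall x : R, 0 <= x <= 1 ->
        forall a b : R, 0 <= a -> a <= b ->
          (forall gamma, a <= gamma <= b -> 0 < F_L rho gamma beta nu x) ->
          exp_concave_on1 [set gamma : R | a <= gamma <= b]
            (fun gamma => ln (F_L rho gamma beta nu x)))).
Proof.
move=> rho_gt0 /andP[nu_gt0 nu_lt1]; split.
  move=> tmin tmax l1 l3 _ _ l1_ge0 l3_gt0 _ /andP[l3_ge0 l3_small] x /andP[_ x1].
  have t_ge0 : 0 <= l1 / l3 by rewrite divr_ge0 // ltW.
  have E_gt1 : 1 < expR (rho + l1 / l3 * (1 - nu)).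
    rewrite -[X in X < _]expR0 ltr_expR.
    have : 0 <= l1 / l3 * (1 - nu) by rewrite mulr_ge0 // subr_ge0 ltW.
    lra.
  by apply: F_U_gt0 => //; apply: mulr_lt1_of_ltV; rewrite ?subr_gt0.
split=> [x _|]; first exact: F_U_concave.
split=> [x _ K K_pos _ K_convex F_pos|].
  apply: exp_concave_on2_ln F_pos => //.
  exact: concave_on2S K_pos (F_U_concave _ _ _).
move=> beta /ltW beta_ge0.
have F_L_min gamma x : 0 <= gamma -> 0 <= x <= 1 ->
    1 + gamma * (1 - A_L rho beta nu) <= F_L rho gamma beta nu x.
  by move=> gamma_ge0 /andP[x_ge0 _]; exact: F_L_ge_min.
split=> [x _|].
  by exists 1, (expR (beta * x) - A_L rho beta nu) => gamma; exact: F_L_affine.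
split=> [gamma gamma_ge0|].
  by split=> [x|]; [exact: F_L_min | exists 0; rewrite ?F_L_at0 ?lexx ?ler01].
split=> [A_le1 gamma x gamma_ge0 x01|].
  by have := F_L_min gamma x gamma_ge0 x01; nra.
split=> [A_gt1 gamma /andP[gamma_ge0 gamma_small] x x01|x _ a b _ _ F_pos].
  have : gamma * (A_L rho beta nu - 1) < 1.
    by apply: mulr_lt1_of_ltV; rewrite ?subr_gt0.
  by have := F_L_min gamma x gamma_ge0 x01; nra.
apply: exp_concave_on1_ln F_pos; first exact: convex_set1_itv.
by move=> y z t Dy Dz t01; rewrite !F_L_affine; exact: concave_on1_affine.
Qed.
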